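(* In the two-tier residency matching game described in the context with $v\ge e/(e-1)$, consider the variant in which high-tier doctors submit lists of length $K\ge 1$ and low-tier doctors submit lists of length $1$. Under the large market approximation, the social welfare of the symmetric equilibrium of this variant is at least $\frac{e}{2(e-1)}$ times the social welfare of SIMPLE.
   Context: Model: there are $n$ high-tier and $rn$ low-tier doctors ($r>0$), and $n$ high-tier and $rn$ low-tier hospitals, each with one position. Every hospital prefers every high doctor to every low doctor and every doctor prefers every high hospital to every low hospital; within a tier, preferences are independent uniformly random permutations. Each doctor submits a ranked list of hospitals of the allowed length $L$: a strategy $(k,L-k)$ lists his $k$ most preferred high hospitals followed by his $L-k$ most preferred low hospitals. Hospitals submit full true rankings; doctor-proposing deferred acceptance is run. Values: a doctor gets $v>1$ if matched to a high hospital, $1$ if matched to a low one, $0$ if unmatched; a hospital gets $v$ from a high doctor, $1$ from a low doctor, $0$ if unfilled; social welfare is the sum of all agents' values. Large market approximation: $n\to\infty$ with $r,K,v$ fixed; each application is accepted independently with a probability determined by the aggregate strategy profile via fixed-point equations (expected matched doctors = expected hospitals receiving at least one admissible application; a hospital receiving on average $\lambda$ applications gets none with probability $e^{-\lambda}$; low doctors' applications to hospitals already taken by high doctors are rejected). Equilibrium: symmetric Nash equilibrium (all doctors of a tier use the same, possibly mixed, strategy, each maximizing expected value given the acceptance probabilities). SIMPLE: the outcome when every doctor submits a single application to his most preferred hospital in his own tier; its welfare is $2(v+r)n(1-1/e)$. *)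

From Stdlib Require Import Reals.
Open Scope R_scope.

(* Large-market model of the two-tier residency game, all quantities
   normalised per high-tier hospital (i.e. divided by n).

   High doctors (n of them) use a mixed strategy x : nat -> R, where x k is
   the probability of the list (k, K-k), k = 0..K.  Low doctors (r n of
   them) have lists of length 1 and use strategy (1,0) (apply to a high
   hospital) with probability y and (0,1) with probability 1-y. *)

(* phi lam = (1 - e^{-lam}) / lam, with phi 0 = 1 (its continuous limit):
   the acceptance probability of an application at a hospital receiving on
   average lam applications (= 1 - e^{-lam} filled hospitals per lam
   applications). *)
Definition phi (lam : R) : R :=
  if Req_EM_T lam 0 then 1 else (1 - exp (- lam)) / lam.

(* geom q m = sum_{j<m} q^j : expected number of applications actually
   made (proposals in DA) by a doctor going down m hospitals, each
   rejection having probability q. *)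
Fixpoint geom (q : R) (m : nat) : R :=
  match m with
  | O => 0
  | S m' => 1 + q * geom q m'
  end.

(* expected applications per high hospital from high doctors *)
Definition lamHH (K : nat) (x : nat -> R) (pHH : R) : R :=
  sum_f_R0 (fun k => x k * geom (1 - pHH) k) K.

(* expected applications per low hospital from high doctors *)
Definition lamHL (r : R) (K : nat) (x : nat -> R) (pHH pHL : R) : R :=
  / r * sum_f_R0 (fun k => x k * (1 - pHH) ^ k * geom (1 - pHL) (K - k)) K.

(* Fixed-point equations of the large market approximation:
   pHH: acceptance prob. of a high doctor's application to a high hospital;
   pHL: same for a high doctor at a low hospital;
   pLH: low doctor at a high hospital (rejected if the hospital is taken by
        a high doctor, prob. 1 - e^{-lamHH}; otherwise competes with the
        other low applicants, on average r y per high hospital);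
   pLL: low doctor at a low hospital (free w.p. e^{-lamHL}; on average 1-y
        low applicants per low hospital). *)
Definition fixed_point (r : R) (K : nat) (x : nat -> R) (y pHH pHL pLH pLL : R)
  : Prop :=
  0 <= pHH <= 1 /\ 0 <= pHL <= 1 /\ 0 <= pLH <= 1 /\ 0 <= pLL <= 1 /\
  pHH = phi (lamHH K x pHH) /\
  pHL = phi (lamHL r K x pHH pHL) /\
  pLH = exp (- lamHH K x pHH) * phi (r * y) /\
  pLL = exp (- lamHL r K x pHH pHL) * phi (1 - y).

(* expected value of a high doctor using (k, K-k) *)
Definition UH (v : R) (K : nat) (pHH pHL : R) (k : nat) : R :=
  v * (1 - (1 - pHH) ^ k) + (1 - pHH) ^ k * (1 - (1 - pHL) ^ (K - k)).

Definition UL_high (v pLH : R) : R := v * pLH.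
Definition UL_low (pLL : R) : R := pLL.

Definition mixed (K : nat) (x : nat -> R) : Prop :=
  (forall k, (k <= K)%nat -> 0 <= x k) /\ sum_f_R0 x K = 1.

Definition sym_equilibrium (v r : R) (K : nat) (x : nat -> R)
  (y pHH pHL pLH pLL : R) : Prop :=
  mixed K x /\ 0 <= y <= 1 /\
  fixed_point r K x y pHH pHL pLH pLL /\
  (forall k, (k <= K)%nat -> 0 < x k ->
     forall k', (k' <= K)%nat -> UH v K pHH pHL k' <= UH v K pHH pHL k) /\
  (0 < y -> UL_low pLL <= UL_high v pLH) /\
  (y < 1 -> UL_high v pLH <= UL_low pLL).

(* social welfare (total over all agents, market size n):
   high-high match worth 2v, high doctor-low hospital v+1,
   low doctor-high hospital v+1, low-low 2. *)
Definition welfare (n v r : R) (K : nat) (x : nat -> R) (y pHH pHL pLH pLL : R)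
  : R :=
  n * ( 2 * v * sum_f_R0 (fun k => x k * (1 - (1 - pHH) ^ k)) K
      + (v + 1) * sum_f_R0 (fun k => x k * (1 - pHH) ^ k
                                   * (1 - (1 - pHL) ^ (K - k))) K
      + (v + 1) * (r * y * pLH)
      + 2 * (r * (1 - y) * pLL) ).

Definition welfare_SIMPLE (n v r : R) : R := 2 * (v + r) * n * (1 - 1 / exp 1).

(* In equilibrium at least half of the high hospitals are filled by high
   doctors.  Either some high doctor lists only low hospitals, which is a best
   response only if an application to a high hospital is accepted with
   probability at most 1/v <= 2/3 (this forces congestion e^(-lambda) <= 1/2),
   or every high doctor lists a high hospital, so the high hospitals receive
   at least one application each on average.  Hence the high-high matches
   alone are worth at least v n.  On the low tier, a low hospital is left free
   by the high doctors with probability e^(-mu); the low doctors' indifference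
   condition (v pLH >= pLL whenever some of them apply high) and the
   inequality (1 + t) (1 - e^(-t)) >= t show that these hospitals, together
   with the ones taken by high doctors, contribute at least r n.  So the
   welfare is at least (v + r) n = e / (2 (e - 1)) * SIMPLE. *)

From Stdlib Require Import Reals Factorial Lra Lia Psatz.
Open Scope R_scope.

Lemma exp_ge_taylor2 (t : R) : 0 <= t -> 1 + t + t ^ 2 / 2 <= exp t.
Proof.
  intro Ht.
  assert (Hgrow : Un_growing (E1 t)).
  { intro m; unfold E1; rewrite tech5.
    assert (0 <= / INR (fact (S m)) * t ^ S m).
    { apply Rmult_le_pos; [left; apply Rinv_0_lt_compat, lt_0_INR, lt_O_fact |].
      now apply pow_le. }
    lra. }
  pose proof (growing_ineq (E1 t) (exp t) Hgrow (E1_cvg t) 2) as Hbound.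
  unfold E1 in Hbound; simpl in Hbound; lra.
Qed.

Lemma exp_neg_le_1 (t : R) : 0 <= t -> exp (- t) <= 1.
Proof.
  intro Ht; rewrite <- exp_0.
  destruct (Req_dec t 0) as [-> | Ht0].
  - rewrite Ropp_0; lra.
  - left; apply exp_increasing; lra.
Qed.

Lemma pow_le_1 (a : R) (k : nat) : 0 <= a <= 1 -> a ^ k <= 1.
Proof. intro Ha; rewrite <- (pow1 k); now apply pow_incr. Qed.

Lemma pow_le_base (a : R) (k : nat) : 0 <= a <= 1 -> (1 <= k)%nat -> a ^ k <= a.
Proof.
  intros Ha Hk; destruct k as [|k]; [lia |]; simpl.
  pose proof (pow_le_1 a k Ha); pose proof (pow_le a k (proj1 Ha)); nra.
Qed.

Lemma sum_f_R0_nonneg (f : nat -> R) (N : nat) :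
  (forall k, (k <= N)%nat -> 0 <= f k) -> 0 <= sum_f_R0 f N.
Proof.
  intro Hf; rewrite <- (Rmult_0_l (INR (S N))), <- sum_cte.
  now apply sum_Rle.
Qed.

Lemma geom_nonneg (q : R) (k : nat) : 0 <= q -> 0 <= geom q k.
Proof.
  intro Hq; induction k as [|k IH]; simpl; [lra |].
  pose proof (Rmult_le_pos _ _ Hq IH); lra.
Qed.

Lemma geom_ge_1 (q : R) (k : nat) : 0 <= q -> (1 <= k)%nat -> 1 <= geom q k.
Proof.
  intros Hq Hk; destruct k as [|k]; [lia |]; simpl.
  pose proof (Rmult_le_pos _ _ Hq (geom_nonneg q k Hq)); lra.
Qed.

Lemma one_sub_mul_geom (q : R) (k : nat) : (1 - q) * geom q k = 1 - q ^ k.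
Proof.
  induction k as [|k IH]; simpl; [ring |].
  transitivity (1 - q + q * ((1 - q) * geom q k)); [ring |].
  rewrite IH; ring.
Qed.

Lemma phi0 : phi 0 = 1.
Proof. unfold phi; destruct (Req_EM_T 0 0); [reflexivity | congruence]. Qed.

Lemma mul_phi (t : R) : t * phi t = 1 - exp (- t).
Proof.
  unfold phi; destruct (Req_EM_T t 0) as [-> | Ht].
  - rewrite Ropp_0, exp_0; ring.
  - field; exact Ht.
Qed.

(* Equivalent to exp t >= 1 + t. *)
Lemma one_le_succ_mul_phi (t : R) : 0 <= t -> 1 <= (1 + t) * phi t.
Proof.
  intro Ht; destruct (Req_dec t 0) as [-> | Ht0]; [rewrite phi0; lra |].
  apply (Rmult_le_reg_l t); [lra |].
  rewrite Rmult_1_r, (Rmult_comm (1 + t)), <- Rmult_assoc, mul_phi, exp_Ropp.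
  pose proof (exp_ineq1_le t); pose proof (exp_pos t).
  assert (Hinv : exp t * / exp t = 1) by (apply Rinv_r; lra).
  pose proof (Rinv_0_lt_compat _ (exp_pos t)); nra.
Qed.

Lemma exp_neg_le_half_of_ge_1 (t : R) : 1 <= t -> exp (- t) <= 1 / 2.
Proof.
  intro Ht; rewrite exp_Ropp.
  pose proof (exp_ineq1_le t).
  apply (Rmult_le_reg_l (exp t)); [apply exp_pos |].
  rewrite Rinv_r by (apply exp_neq_0); lra.
Qed.

(* If e^t < 2 then t + t^2/2 < 1, which makes phi t = (1 - e^(-t)) / t exceed 2/3. *)
Lemma exp_neg_le_half_of_phi_le (t : R) :
  0 <= t -> phi t <= 2 / 3 -> exp (- t) <= 1 / 2.
Proof.
  intros Ht Hphi.
  destruct (Req_dec t 0) as [-> | Ht0]; [rewrite phi0 in Hphi; lra |].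
  pose proof (mul_phi t) as Hmul; rewrite exp_Ropp in *.
  pose proof (exp_ge_taylor2 t Ht) as Htaylor.
  set (E := exp t) in *.
  assert (HE : 0 < E) by apply exp_pos.
  assert (Hinv : E * / E = 1) by (apply Rinv_r; lra).
  assert (H2E : 2 <= E).
  { destruct (Rle_lt_dec 2 E) as [| HE2]; [assumption | exfalso].
    assert (t * phi t <= t * (2 / 3)) by (apply Rmult_le_compat_l; lra).
    assert (E * (1 - / E) <= E * (t * (2 / 3))) by (apply Rmult_le_compat_l; lra).
    nra. }
  apply (Rmult_le_reg_l E); [exact HE |]; lra.
Qed.

Lemma three_halves_le_threshold : 3 / 2 <= exp 1 / (exp 1 - 1).
Proof.
  pose proof exp_le_3; pose proof (exp_ineq1_le 1).
  apply (Rmult_le_reg_r (exp 1 - 1)); [lra |].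
  replace (exp 1 / (exp 1 - 1) * (exp 1 - 1)) with (exp 1) by (field; lra); lra.
Qed.

Section Model.

Variables (r : R) (K : nat) (x : nat -> R).
Hypothesis x_nonneg : forall k, (k <= K)%nat -> 0 <= x k.

Lemma lamHH_nonneg (pHH : R) : pHH <= 1 -> 0 <= lamHH K x pHH.
Proof.
  intro HpHH; apply sum_f_R0_nonneg; intros k Hk.
  apply Rmult_le_pos; [now apply x_nonneg | apply geom_nonneg; lra].
Qed.

Lemma lamHL_nonneg (pHH pHL : R) :
  0 < r -> 0 <= pHH <= 1 -> pHL <= 1 -> 0 <= lamHL r K x pHH pHL.
Proof.
  intros Hr HpHH HpHL; apply Rmult_le_pos; [left; now apply Rinv_0_lt_compat |].
  apply sum_f_R0_nonneg; intros k Hk.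
  repeat apply Rmult_le_pos;
    [now apply x_nonneg | apply pow_le; lra | apply geom_nonneg; lra].
Qed.

Lemma lamHH_ge_one_sub_x0 (pHH : R) :
  (1 <= K)%nat -> sum_f_R0 x K = 1 -> pHH <= 1 -> 1 - x 0%nat <= lamHH K x pHH.
Proof.
  intros HK Hsum HpHH; unfold lamHH.
  rewrite (decomp_sum x K) in Hsum by lia; rewrite decomp_sum by lia.
  change (geom (1 - pHH) 0) with 0.
  assert (Htail : sum_f_R0 (fun i => x (S i)) (Nat.pred K)
                  <= sum_f_R0 (fun i => x (S i) * geom (1 - pHH) (S i)) (Nat.pred K)).
  { apply sum_Rle; intros i Hi.
    assert (0 <= x (S i)) by (apply x_nonneg; lia).
    pose proof (geom_ge_1 (1 - pHH) (S i) ltac:(lra) ltac:(lia)); nra. }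
  lra.
Qed.

Lemma sum_high_high_matches (pHH : R) :
  pHH = phi (lamHH K x pHH) ->
  sum_f_R0 (fun k => x k * (1 - (1 - pHH) ^ k)) K = 1 - exp (- lamHH K x pHH).
Proof.
  intro EpHH; rewrite <- mul_phi, <- EpHH; unfold lamHH.
  rewrite Rmult_comm, scal_sum; apply sum_eq; intros k _.
  rewrite <- one_sub_mul_geom; ring.
Qed.

Lemma sum_high_low_matches (pHH pHL : R) :
  0 < r -> pHL = phi (lamHL r K x pHH pHL) ->
  sum_f_R0 (fun k => x k * (1 - pHH) ^ k * (1 - (1 - pHL) ^ (K - k))) K
  = r * (1 - exp (- lamHL r K x pHH pHL)).
Proof.
  intros Hr EpHL; rewrite <- mul_phi, <- EpHL; unfold lamHL.
  transitivity (pHL * sum_f_R0 (fun k => x k * (1 - pHH) ^ k * geom (1 - pHL) (K - k)) K);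
    [| field; lra].
  rewrite scal_sum; apply sum_eq; intros k _.
  rewrite <- one_sub_mul_geom; ring.
Qed.

End Model.

Lemma UH_all_low_le_1 (v : R) (K : nat) (pHH pHL : R) :
  0 <= pHL <= 1 -> UH v K pHH pHL 0 <= 1.
Proof.
  intro HpHL; unfold UH; rewrite Nat.sub_0_r; simpl pow.
  pose proof (pow_le (1 - pHL) K ltac:(lra)); lra.
Qed.

Lemma UH_all_high_ge (v : R) (K : nat) (pHH pHL : R) :
  0 <= v -> 0 <= pHH <= 1 -> (1 <= K)%nat -> v * pHH <= UH v K pHH pHL K.
Proof.
  intros Hv HpHH HK; unfold UH; rewrite Nat.sub_diag; simpl pow.
  pose proof (pow_le_base (1 - pHH) K ltac:(lra) HK); nra.
Qed.

Lemma exp_neg_lamHH_le_half (v r : R) (K : nat) (x : nat -> R) (y pHH pHL pLH pLL : R) :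
  (1 <= K)%nat -> 3 / 2 <= v -> sym_equilibrium v r K x y pHH pHL pLH pLL ->
  exp (- lamHH K x pHH) <= 1 / 2.
Proof.
  intros HK Hv [[Hx Hsum] [_ [Hfp [HbestH _]]]].
  destruct Hfp as (HpHH & HpHL & _ & _ & EpHH & _).
  destruct (Rle_lt_or_eq_dec 0 (x 0%nat)) as [Hx0 | Hx0]; [apply Hx; lia | |].
  - (* the all-low list (0, K) is a best response *)
    apply exp_neg_le_half_of_phi_le; [apply lamHH_nonneg; [exact Hx | lra] |].
    rewrite <- EpHH.
    pose proof (HbestH 0%nat ltac:(lia) Hx0 K (le_n K)).
    pose proof (UH_all_low_le_1 v K pHH pHL HpHL).
    pose proof (UH_all_high_ge v K pHH pHL ltac:(lra) HpHH HK).
    nra.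
  - apply exp_neg_le_half_of_ge_1.
    pose proof (lamHH_ge_one_sub_x0 K x Hx pHH HK Hsum ltac:(lra)); lra.
Qed.

Lemma low_tier_welfare_ge_1 (v y pLH pLL mu : R) :
  0 <= v -> 0 <= y <= 1 -> 0 <= pLH -> 0 <= mu ->
  pLL = exp (- mu) * phi (1 - y) -> (0 < y -> pLL <= v * pLH) ->
  1 <= (v + 1) * (1 - exp (- mu)) + (v + 1) * (y * pLH) + 2 * ((1 - y) * pLL).
Proof.
  intros Hv Hy HpLH Hmu EpLL Hindiff.
  assert (Hfree : exp (- mu) <= (2 - y) * pLL).
  { rewrite EpLL.
    pose proof (one_le_succ_mul_phi (1 - y) ltac:(lra)); pose proof (exp_pos (- mu)).
    replace (2 - y) with (1 + (1 - y)) by ring; nra. }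
  assert (Hswitch : y * pLL <= v * (y * pLH)).
  { destruct (Rle_lt_or_eq_dec 0 y) as [Hy0 | <-]; [lra | |]; [| lra].
    pose proof (Hindiff Hy0); nra. }
  pose proof (exp_neg_le_1 mu Hmu).
  assert (0 <= v * (1 - exp (- mu))) by (apply Rmult_le_pos; lra).
  assert (0 <= y * pLH) by (apply Rmult_le_pos; lra).
  nra.
Qed.

Lemma welfare_SIMPLE_scaled (n v r : R) :
  exp 1 / (2 * (exp 1 - 1)) * welfare_SIMPLE n v r = n * (v + r).
Proof.
  pose proof (exp_ineq1_le 1); pose proof (exp_pos 1).
  unfold welfare_SIMPLE; field; lra.
Qed.

Theorem lemma4 (n v r : R) (K : nat) (x : nat -> R) (y pHH pHL pLH pLL : R) :
  0 < n -> 0 < r -> (1 <= K)%nat ->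
  exp 1 / (exp 1 - 1) <= v ->
  sym_equilibrium v r K x y pHH pHL pLH pLL ->
  exp 1 / (2 * (exp 1 - 1)) * welfare_SIMPLE n v r
    <= welfare n v r K x y pHH pHL pLH pLL.
Proof.
  intros Hn Hr HK Hv Heq.
  pose proof (Rle_trans _ _ _ three_halves_le_threshold Hv) as Hv32.
  pose proof Heq as [[Hx _] [Hy [Hfp [_ [Hindiff _]]]]].
  destruct Hfp as (HpHH & HpHL & HpLH & _ & EpHH & EpHL & _ & EpLL).
  pose proof (exp_neg_lamHH_le_half v r K x y pHH pHL pLH pLL HK Hv32 Heq) as Hhigh.
  pose proof (low_tier_welfare_ge_1 v y pLH pLL (lamHL r K x pHH pHL) ltac:(lra) Hy
                (proj1 HpLH) (lamHL_nonneg r K x Hx pHH pHL Hr HpHH (proj2 HpHL))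
                EpLL Hindiff) as Hlow.
  rewrite welfare_SIMPLE_scaled; unfold welfare.
  rewrite (sum_high_high_matches K x pHH EpHH), (sum_high_low_matches r K x pHH pHL Hr EpHL).
  apply Rmult_le_compat_l; [lra |].
  assert (v <= 2 * v * (1 - exp (- lamHH K x pHH))) by nra.
  pose proof (Rmult_le_compat_l r _ _ (Rlt_le _ _ Hr) Hlow).
  lra.
Qed.
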